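(* If $I$ is a finite set of positive integers and $i\in I$, then $d(I;i)=0$, where $d(I;z)$ is the descent polynomial evaluated at $z=i$.
   Context: For a finite set $I$ of positive integers with $m=\max(I\cup\{0\})$ and $n>m$, $d(I;n)$ is the number of permutations $\pi\in\mathfrak S_n$ with $\{j\mid\pi_j>\pi_{j+1}\}=I$; this is a polynomial in $n$, and $d(I;z)$ denotes the polynomial evaluated at an arbitrary complex number $z$. *)

From HB Require Import structures.
From mathcomp Require Import all_boot all_order all_algebra all_fingroup.
Set Implicit Arguments. Unset Strict Implicit. Unset Printing Implicit Defensive.
Import GRing.Theory Num.Theory.

(* One-line (0-indexed) value of a permutation of 'I_n at nat position k
   (0 if k >= n, never used there). *)
Definition pval n (s : 'S_n) (k : nat) : nat :=
  if insub k is Some o then val (s o) else 0.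

(* j (1-indexed, 1 <= j <= n-1) is a descent of s, i.e. pi_j > pi_{j+1}
   where pi_j = s (j-1) in 0-indexed terms. *)
Definition is_desc n (s : 'S_n) (j : nat) : bool :=
  [&& 0 < j, j < n & pval s j < pval s j.-1].

Definition desc_set_eq n (s : 'S_n) (I : seq nat) : bool :=
  all (fun x => x < n) I && [forall j : 'I_n, is_desc s j == (val j \in I)].

Definition dcount (I : seq nat) (n : nat) : nat :=
  #|[set s : 'S_n | desc_set_eq s I]|.

Definition maxI (I : seq nat) : nat := \max_(x <- I) x.

From HB Require Import structures.
From mathcomp Require Import all_boot all_order all_algebra all_fingroup.
Set Implicit Arguments. Unset Strict Implicit. Unset Printing Implicit Defensive.
Import GRing.Theory Num.Theory.

(* Write beta(S;n) for the number of permutations of S_n whose descent set is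
   contained in S.  If max S = k <= n, such a permutation is determined by the set
   of its first k values, an arrangement of them with descents in S, and the
   increasing arrangement of the remaining values, so beta(S;n) = C(n,k) beta(S;k)
   is a polynomial in n.  Inclusion-exclusion over the subsets S of I gives
   d(I;n) = sum_(S <= I) (-1)^|I \ S| C(n, max S) beta(S; max S).  Evaluated at
   i \in I, the term of S equals, up to sign, the number of permutations of S_i
   with descents in S when max S <= i and vanishes otherwise; since position i is
   not a descent position in S_i, adding or removing i from S changes only the
   sign, so the terms cancel in pairs.  Any polynomial agreeing with d(I;n) for
   all large n is this one. *)

Lemma pvalE n (s : 'S_n) (x : 'I_n) : pval s x = s x.
Proof. by rewrite /pval; case: insubP => [y _ /val_inj -> //|]; rewrite ltn_ord. Qed.

Lemma pval_ord n (s : 'S_n) x (hx : x < n) : pval s x = s (Ordinal hx).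
Proof. exact: pvalE s (Ordinal hx). Qed.

Lemma pval_lt n (s : 'S_n) x : x < n -> pval s x < n.
Proof. by move=> hx; rewrite (pval_ord s hx). Qed.

Lemma pval_inj n (s : 'S_n) x y : x < n -> y < n -> pval s x = pval s y -> x = y.
Proof.
move=> hx hy; rewrite (pval_ord s hx) (pval_ord s hy) => /val_inj /perm_inj.
by move/(congr1 val).
Qed.

Lemma pval_surj n (s : 'S_n) j : j < n -> exists2 x, x < n & pval s x = j.
Proof. by move=> hj; exists ((s^-1)%g (Ordinal hj)); rewrite ?pvalE ?permKV. Qed.

Lemma is_descP n (s : 'S_n) j : is_desc s j -> 0 < j < n.
Proof. by case/and3P=> -> ->. Qed.

Lemma is_desc1 n j : ~~ is_desc (1%g : 'S_n) j.
Proof.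
apply/negP => /and3P [j0 jn].
have jn' : j.-1 < n by apply: leq_ltn_trans jn; exact: leq_pred.
by rewrite (pval_ord _ jn) (pval_ord _ jn') !perm1 /= ltnNge leq_pred.
Qed.

Lemma no_desc_perm1 n (s : 'S_n) : (forall j : 'I_n, ~~ is_desc s j) -> s = 1%g.
Proof.
move=> no_desc.
have incr x : x < n -> x <= pval s x.
  elim: x => [|x IHx] hx //; have hx' := ltnW hx.
  have := no_desc (Ordinal hx); rewrite /is_desc /= hx /= -leqNgt leq_eqVlt.
  case/orP=> [/eqP /(pval_inj hx' hx) /eqP|]; first by rewrite ltn_eqF.
  exact: leq_ltn_trans (IHx hx').
have incr' (x : 'I_n) : x <= s x by rewrite -pvalE incr.
(* The displacements s x - x are nonnegative and sum to 0. *)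
have sum0 : \sum_(x : 'I_n) (val (s x) - val x) = 0.
  rewrite sumnB; last by move=> x _; exact: incr'.
  by rewrite [X in _ - X](reindex_inj (@perm_inj _ s)) subnn.
apply/permP=> x; rewrite perm1; apply/val_inj/eqP.
rewrite eqn_leq incr' andbT -subn_eq0.
by move/eqP: sum0; rewrite sum_nat_eq0 => /forallP /(_ x).
Qed.

Lemma sorted_enum_set n (A : {set 'I_n}) : sorted ltn (map val (enum A)).
Proof.
rewrite -deprecated_filter_index_enum sorted_map.
apply: sorted_filter; first exact: ltn_trans.
have -> : index_enum 'I_n = enum 'I_n by rewrite enumT.
by rewrite -sorted_map val_enum_ord iota_ltn_sorted.
Qed.

Lemma ltn_nth_enum_set n (A : {set 'I_n}) d a b : a < #|A| -> b < #|A| ->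
  (nth d (enum A) a < nth d (enum A) b) = (a < b).
Proof.
have mono a' b' : a' < #|A| -> b' < #|A| -> a' < b' ->
    nth d (enum A) a' < nth d (enum A) b'.
  move=> ha hb ab; rewrite -!(nth_map d (val d) val) -?cardE //.
  by apply: (sorted_ltn_nth ltn_trans); rewrite ?sorted_enum_set // inE size_map -cardE.
move=> ha hb; case: (ltngtP a b) => [|ba|->]; [exact: mono| |exact: ltnn].
by apply/negbTE; rewrite -leqNgt ltnW ?mono.
Qed.

Definition count_desc_in n (P : pred nat) : nat :=
  #|[set s : 'S_n | [forall j : 'I_n, is_desc s j ==> P j]]|.

Lemma eq_count_desc_in n (P Q : pred nat) : (forall j, j < n -> P j = Q j) ->
  count_desc_in n P = count_desc_in n Q.
Proof.
move=> PQ; apply: eq_card => s; rewrite !inE.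
by apply: eq_forallb => j; rewrite PQ.
Qed.

Section Shuffle.
Variables n k : nat.

(* Positions [0, k) receive the values in A, ordered by t; positions [k, n)
   receive the values outside A, ordered by r.  The guard makes the map injective
   also when #|A| <> k. *)
Definition shuffle_fun (A : {set 'I_n}) (t : 'S_k) (r : 'S_(n - k)) (x : 'I_n) :=
  if #|A| == k then
    if x < k then nth x (enum A) (pval t x) else nth x (enum (~: A)) (pval r (x - k))
  else x.

Section FixedSet.
Variables (A : {set 'I_n}) (t : 'S_k) (r : 'S_(n - k)).
Hypothesis cardA : #|A| = k.

Lemma cardCA : #|~: A| = n - k.
Proof. by rewrite cardsCs setCK card_ord cardA. Qed.

Lemma k_leq_n : k <= n.
Proof. by rewrite -cardA -[X in _ <= X]card_ord max_card. Qed.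

Lemma pval_lt_sizeA x : x < k -> pval t x < size (enum A).
Proof. by rewrite -cardE cardA; exact: pval_lt. Qed.

Lemma pval_lt_sizeCA (x : 'I_n) : k <= x -> pval r (x - k) < size (enum (~: A)).
Proof.
by move=> kx; rewrite -cardE cardCA pval_lt // ltn_sub2r ?(leq_ltn_trans kx).
Qed.

Lemma shuffle_head (x d : 'I_n) : x < k ->
  shuffle_fun A t r x = nth d (enum A) (pval t x).
Proof. by move=> xk; rewrite /shuffle_fun cardA eqxx xk (set_nth_default d) ?pval_lt_sizeA. Qed.

Lemma shuffle_tail (x d : 'I_n) : k <= x ->
  shuffle_fun A t r x = nth d (enum (~: A)) (pval r (x - k)).
Proof.
move=> kx; rewrite /shuffle_fun cardA eqxx ltnNge kx /=.
by rewrite (set_nth_default d) ?pval_lt_sizeCA.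
Qed.

Lemma shuffle_head_mem (x : 'I_n) : x < k -> shuffle_fun A t r x \in A.
Proof. by move=> xk; rewrite (shuffle_head x xk) -mem_enum mem_nth ?pval_lt_sizeA. Qed.

Lemma shuffle_tail_mem (x : 'I_n) : k <= x -> shuffle_fun A t r x \in ~: A.
Proof. by move=> kx; rewrite (shuffle_tail x kx) -mem_enum mem_nth ?pval_lt_sizeCA. Qed.

Lemma mem_shuffle_head y :
  (y \in A) = [exists x : 'I_n, (x < k) && (shuffle_fun A t r x == y)].
Proof.
apply/idP/existsP => [yA|[x /andP [xk /eqP <-]]]; last exact: shuffle_head_mem.
have yk : index y (enum A) < k by rewrite -cardA cardE index_mem mem_enum.
have [x xk tx] := pval_surj t yk.
have xn : x < n by exact: leq_trans xk k_leq_n.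
exists (Ordinal xn); rewrite xk (shuffle_head y) //= tx nth_index ?mem_enum //.
Qed.

End FixedSet.

Lemma shuffle_fun_inj A t r : injective (shuffle_fun A t r).
Proof.
move=> x y; have [cardA|] := eqVneq #|A| k; last by rewrite /shuffle_fun => /negbTE ->.
have sub_lt (z : 'I_n) : k <= z -> z - k < n - k.
  by move=> kz; rewrite ltn_sub2r // (leq_ltn_trans kz).
case: (ltnP x k) => [xk|kx]; case: (ltnP y k) => [yk|ky].
- rewrite (shuffle_head t r cardA x) // (shuffle_head t r cardA x) // => /eqP.
  rewrite nth_uniq ?enum_uniq ?pval_lt_sizeA // => /eqP /pval_inj e.
  exact/val_inj/e.
- move=> e; have := shuffle_tail_mem t r cardA ky.
  by rewrite -e inE shuffle_head_mem.
- move=> e; have := shuffle_tail_mem t r cardA kx.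
  by rewrite e inE shuffle_head_mem.
- rewrite (shuffle_tail t r cardA x) // (shuffle_tail t r cardA x) // => /eqP.
  rewrite nth_uniq ?enum_uniq ?pval_lt_sizeCA // => /eqP /(pval_inj (sub_lt x kx) (sub_lt y ky)).
  by move/eqP; rewrite eqn_sub2rE // => /eqP /val_inj.
Qed.

Definition shuffle (u : {set 'I_n} * 'S_k * 'S_(n - k)) : 'S_n :=
  perm (@shuffle_fun_inj u.1.1 u.1.2 u.2).

Lemma pval_shuffle A t r j (hj : j < n) :
  pval (shuffle (A, t, r)) j = shuffle_fun A t r (Ordinal hj).
Proof. by rewrite (pval_ord _ hj) permE. Qed.

Lemma shuffle_inj (hk : k <= n) :
  {in [set u : {set 'I_n} * 'S_k * 'S_(n - k) | #|u.1.1| == k] &, injective shuffle}.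
Proof.
move=> [[A1 t1] r1] [[A2 t2] r2]; rewrite !inE /= => /eqP cardA1 /eqP cardA2 e.
have {}e x : shuffle_fun A1 t1 r1 x = shuffle_fun A2 t2 r2 x.
  by have := congr1 (fun s : 'S_n => s x) e; rewrite !permE.
have eA : A1 = A2.
  apply/setP=> y; rewrite (mem_shuffle_head t1 r1) // (mem_shuffle_head t2 r2) //.
  by apply: eq_existsb => x; rewrite e.
subst A2; have et : t1 = t2.
  apply/permP=> o; apply/val_inj; set x := widen_ord hk o.
  have xk : x < k := ltn_ord o.
  move: (e x); rewrite (shuffle_head t1 r1 cardA1 x) // (shuffle_head t2 r2 cardA1 x) //.
  move/eqP.
  by rewrite nth_uniq ?enum_uniq ?pval_lt_sizeA // !pvalE => /eqP.
subst t2; congr (_, _, _); apply/permP=> o; apply/val_inj.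
have ho : k + o < n by rewrite -ltn_subRL ltn_ord.
set x := Ordinal ho; have kx : k <= x by rewrite /= leq_addr.
move: (e x); rewrite (shuffle_tail t1 r1 cardA1 x) // (shuffle_tail t1 r2 cardA1 x) //.
move/eqP.
by rewrite nth_uniq ?enum_uniq ?pval_lt_sizeCA //= addKn !pvalE => /eqP.
Qed.

Lemma shuffle_onto (hk : k <= n) :
  shuffle @: [set u : {set 'I_n} * 'S_k * 'S_(n - k) | #|u.1.1| == k] = [set: 'S_n].
Proof.
apply/eqP; rewrite eqEcard subsetT cardsT card_Sn card_in_imset; last exact: shuffle_inj.
have -> : [set u : {set 'I_n} * 'S_k * 'S_(n - k) | #|u.1.1| == k] =
    setX (setX [set A : {set 'I_n} | #|A| == k] [set: 'S_k]) [set: 'S_(n - k)].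
  by apply/setP => [[[A t] r]]; rewrite !inE /= !andbT.
by rewrite !cardsX card_draws !cardsT !card_Sn card_ord -mulnA bin_fact // leqnn.
Qed.

Section Descents.
Variables (A : {set 'I_n}) (t : 'S_k) (r : 'S_(n - k)).
Hypothesis cardA : #|A| = k.

Lemma is_desc_shuffle_head j : 0 < j -> j < k ->
  is_desc (shuffle (A, t, r)) j = is_desc t j.
Proof.
move=> j0 jk; have jn : j < n by exact: leq_trans jk (k_leq_n cardA).
have jn' : j.-1 < n by apply: leq_ltn_trans jn; exact: leq_pred.
have jk' : j.-1 < k by apply: leq_ltn_trans jk; exact: leq_pred.
rewrite /is_desc j0 jn jk !pval_shuffle.
rewrite !(shuffle_head t r cardA (Ordinal jn)) //.
by rewrite ltn_nth_enum_set // cardA pval_lt.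
Qed.

Lemma is_desc_shuffle_tail j : k < j ->
  is_desc (shuffle (A, t, r)) j = is_desc r (j - k).
Proof.
move=> kj; rewrite /is_desc subn_gt0 kj (leq_ltn_trans _ kj) //=.
have [jn|nj] := ltnP j n; last by rewrite [_ < n - k]ltnNge leq_sub2r.
have jn' : j.-1 < n by apply: leq_ltn_trans jn; exact: leq_pred.
have kj' : k <= j.-1 by rewrite -ltnS prednK // (leq_ltn_trans _ kj).
rewrite ltn_sub2r ?(ltn_trans kj) // !pval_shuffle.
rewrite !(shuffle_tail t r cardA (Ordinal jn)) ?(ltnW kj) //=.
have := pval_lt_sizeCA r cardA (x := Ordinal jn) (ltnW kj).
have := pval_lt_sizeCA r cardA (x := Ordinal jn') kj'.
rewrite /= => lt1 lt2; rewrite ltn_nth_enum_set ?cardE //.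
by rewrite -!subn1 -!subnDA addnC.
Qed.

(* The descents of a shuffle are those of t, possibly k, and those of r shifted
   by k; as P lies in [0, k], containing them all forces r to have no descent. *)
Lemma shuffle_desc_in (P : pred nat) : (forall j, P j -> j <= k) -> (0 < k -> P k) ->
  [forall j : 'I_n, is_desc (shuffle (A, t, r)) j ==> P j] =
  [forall j : 'I_k, is_desc t j ==> P j] && (r == 1%g).
Proof.
move=> Pk Pkk; apply/forallP/andP => [desc_in|[/forallP t_in /eqP r1] j].
  split.
    apply/forallP => j; apply/implyP => dj; have /andP [j0 jk] := is_descP dj.
    have jn : j < n by exact: leq_trans jk (k_leq_n cardA).
    by have := desc_in (Ordinal jn); rewrite /= is_desc_shuffle_head // dj.
  apply/eqP/no_desc_perm1 => j; apply/negP => dj; have /andP [j0 jk] := is_descP dj.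
  have jn : k + j < n by rewrite -ltn_subRL.
  have kj : k < k + j by rewrite -addn1 leq_add2l.
  have := desc_in (Ordinal jn); rewrite /= is_desc_shuffle_tail // addKn dj /=.
  by move/Pk; rewrite leqNgt kj.
apply/implyP => dj; have /andP [j0 _] := is_descP dj.
case: (ltngtP j k) => [jk|kj|jk]; last by rewrite jk; apply: Pkk; rewrite -jk.
- by move: dj; rewrite is_desc_shuffle_head //; apply/implyP/(t_in (Ordinal jk)).
- by move: dj; rewrite is_desc_shuffle_tail // r1 (negbTE (is_desc1 _ _)).
Qed.

End Descents.

Lemma count_desc_in_split (P : pred nat) : k <= n ->
  (forall j, P j -> j <= k) -> (0 < k -> P k) ->
  count_desc_in n P = 'C(n, k) * count_desc_in k P.
Proof.
move=> hk Pk Pkk.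
set T := [set t : 'S_k | [forall j : 'I_k, is_desc t j ==> P j]].
set D := [set u : {set 'I_n} * 'S_k * 'S_(n - k) |
            [&& #|u.1.1| == k, u.1.2 \in T & u.2 == 1%g]].
have sD : D \subset [set u : {set 'I_n} * 'S_k * 'S_(n - k) | #|u.1.1| == k].
  by apply/subsetP => u; rewrite !inE => /andP [].
rewrite /count_desc_in -/T.
have -> : [set s : 'S_n | [forall j : 'I_n, is_desc s j ==> P j]] = shuffle @: D.
  apply/setP => s; rewrite inE; apply/idP/imsetP => [desc_in|[u uD ->]].
    have := in_setT s; rewrite -(shuffle_onto hk).
    case/imsetP => [[[A t] r] /[!inE] /= /eqP cardA es].
    exists (A, t, r); rewrite // inE /= cardA eqxx inE.
    by rewrite -(shuffle_desc_in _ _ cardA) // -es.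
  move: uD; case: u => [[A t] r]; rewrite !inE /= => /and3P [/eqP cardA tT r1].
  by rewrite shuffle_desc_in // tT.
rewrite card_in_imset; last first.
  by move=> x y xD yD; apply: shuffle_inj => //; apply: (subsetP sD).
have -> : D = setX (setX [set A : {set 'I_n} | #|A| == k] T) [set 1%g].
  by apply/setP => [[[A t] r]]; rewrite !inE /= andbA.
by rewrite !cardsX card_draws cards1 muln1 card_ord.
Qed.

End Shuffle.

Lemma sum_eq0_involution (R : numDomainType) (T : finType) (P : pred T) (F : T -> R)
    (g : T -> T) :
  involutive g -> (forall x, P (g x) = P x) -> (forall x, P x -> F (g x) = - F x)%R ->
  (\sum_(x | P x) F x = 0)%R.
Proof.
move=> gK Pg Fg.
have sum2 : ((\sum_(x | P x) F x) *+ 2 = 0)%R.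
  rewrite mulr2n [X in (_ + X)%R](reindex_inj (inv_inj gK)) /= (eq_bigl _ _ Pg).
  by rewrite -big_split big1 // => x Px /=; rewrite Fg // addrN.
by apply/eqP; move/eqP: sum2; rewrite mulrn_eq0.
Qed.

Section Toggle.
Variable T : finType.
Local Open Scope ring_scope.
Implicit Types (x y : T) (B C S : {set T}).

Definition toggle x S : {set T} := if x \in S then S :\ x else x |: S.

Lemma toggleK x : involutive (toggle x).
Proof.
move=> S; rewrite /toggle; case: (boolP (x \in S)) => xS.
  by rewrite !inE eqxx /= setD1K.
by rewrite !inE eqxx /= setU1K.
Qed.

Lemma in_toggle x S y : y != x -> (y \in toggle x S) = (y \in S).
Proof. by move=> yx; rewrite /toggle; case: ifP; rewrite !inE (negbTE yx). Qed.

Lemma toggle_subset x S C : x \in C -> (toggle x S \subset C) = (S \subset C).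
Proof.
move=> xC; apply/subsetP/subsetP => sub y; case: (eqVneq y x) => [->//|yx].
  by rewrite -(in_toggle S yx); apply: sub.
by rewrite in_toggle //; apply: sub.
Qed.

Lemma subset_toggle x B S : x \notin B -> (B \subset toggle x S) = (B \subset S).
Proof.
move=> xB; apply/subsetP/subsetP => sub y yB; have yx : y != x by apply: contraNneq xB => <-.
  by rewrite -(in_toggle S yx) sub.
by rewrite in_toggle // sub.
Qed.

Lemma sign_toggle (R : pzRingType) x C S : x \in C ->
  (-1 : R) ^+ #|C :\: toggle x S| = - (-1) ^+ #|C :\: S|.
Proof.
move=> xC; rewrite /toggle; case: (boolP (x \in S)) => xS.
  have -> : C :\: (S :\ x) = x |: (C :\: S).
    by apply/setP => y; rewrite !inE; case: eqVneq => [->|].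
  by rewrite cardsU1 !inE xS /= exprS mulN1r.
have -> : #|C :\: S| = #|C :\: (x |: S)|.+1.
  rewrite (cardsD1 x (C :\: S)) !inE xS xC /= add1n; congr _.+1.
  by apply: eq_card => y; rewrite !inE negb_or andbA.
by rewrite exprS mulN1r opprK.
Qed.

Lemma sum_sign_interval (R : numDomainType) B C :
  \sum_(S : {set T} | (B \subset S) && (S \subset C)) (-1 : R) ^+ #|C :\: S| = (B == C)%:R.
Proof.
have [<-|neBC] := eqVneq B C.
  rewrite (big_pred1 B) ?setDv ?cards0 ?expr0 //.
  by move=> S; rewrite -eqEsubset eq_sym.
have [BC|] := boolP (B \subset C); last first.
  by move=> nBC; rewrite big_pred0 // => S; apply: contraNF nBC => /andP [/subset_trans]; apply.
have /set0Pn [x] : C :\: B != set0 by apply: contra neBC; rewrite setD_eq0 eqEsubset BC.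
rewrite inE => /andP [xB xC].
apply: (sum_eq0_involution (toggleK x)) => [S|S _]; last exact: sign_toggle.
by rewrite subset_toggle // toggle_subset.
Qed.

End Toggle.

Lemma natr_card_set (R : pzSemiRingType) (T : finType) (Q : pred T) :
  (#|[set x | Q x]|%:R = \sum_x (Q x)%:R :> R)%R.
Proof.
rewrite -sum1_card natr_sum big_mkcond /=; apply: eq_bigr => x _.
by rewrite inE; case: (Q x).
Qed.

Section SubsetsOfI.
Variable m : nat.
Implicit Types S : {set 'I_m.+1}.

Definition natpred S : pred nat := fun j => (j <= m) && (inord j \in S).

Definition max_set S : nat := \max_(x in S) val x.

Lemma max_set_le S : max_set S <= m.
Proof. by apply/bigmax_leqP => x _; rewrite -ltnS ltn_ord. Qed.

Lemma natpred_le_max S j : natpred S j -> j <= max_set S.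
Proof.
case/andP=> jm jS; have := @leq_bigmax_cond _ (mem S) (fun x : 'I_m.+1 => val x) _ jS.
by rewrite /= inordK.
Qed.

Lemma natpred_max S : 0 < max_set S -> natpred S (max_set S).
Proof.
have [->|[x xS] _] := set_0Vmem S; first by rewrite /max_set big_set0.
have S0 : 0 < #|S| by apply/card_gt0P; exists x.
rewrite /max_set; have [y yS ->] := @eq_bigmax_cond _ (mem S) (fun x : 'I_m.+1 => val x) S0.
by rewrite /natpred -ltnS ltn_ord inord_val.
Qed.

Lemma max_set_toggle (x : 'I_m.+1) S i : x <= i ->
  (max_set (toggle x S) <= i) = (max_set S <= i).
Proof.
move=> xi; apply/bigmax_leqP/bigmax_leqP => le_i y yS; case: (eqVneq y x) => [->//|yx].
  by apply: le_i; rewrite in_toggle.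
by apply: le_i; rewrite -(in_toggle S yx).
Qed.

Lemma binom_count_desc_in S i :
  'C(i, max_set S) * count_desc_in (max_set S) (natpred S) =
  if max_set S <= i then count_desc_in i (natpred S) else 0.
Proof.
case: leqP => ki; last by rewrite bin_small.
by rewrite (count_desc_in_split ki (@natpred_le_max S) (@natpred_max S)).
Qed.

End SubsetsOfI.

Definition ordset (I : seq nat) : {set 'I_(maxI I).+1} := [set x | val x \in I].

Lemma leq_maxI (I : seq nat) x : x \in I -> x <= maxI I.
Proof. by move=> xI; rewrite (leq_bigmax_seq (F := id) x xI). Qed.

Section InclusionExclusion.
Variables (I : seq nat) (n : nat).
Hypothesis hn : maxI I < n.
Let m := maxI I.
Variable s : 'S_n.

Let low_desc : {set 'I_m.+1} := [set x : 'I_m.+1 | is_desc s x].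
Let desc_le_m := [forall j : 'I_n, is_desc s j ==> (j <= m)].

Let ord_lt (x : 'I_m.+1) : x < n. Proof. exact: leq_trans (ltn_ord x) hn. Qed.

Lemma desc_in_natpred S :
  [forall j : 'I_n, is_desc s j ==> natpred S j] = desc_le_m && (low_desc \subset S).
Proof.
apply/forallP/andP => [desc_in|[/forallP le_m /subsetP sub] j].
  split; first by apply/forallP => j; apply/implyP => /(implyP (desc_in j)) /andP [].
  apply/subsetP => x; rewrite inE => dx.
  by have := desc_in (Ordinal (ord_lt x)); rewrite /= dx => /andP [_]; rewrite inord_val.
apply/implyP => dj; have jm := implyP (le_m j) dj.
by rewrite /natpred jm sub // inE inordK.
Qed.

Lemma desc_set_eq_ordset : desc_set_eq s I = desc_le_m && (low_desc == ordset I).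
Proof.
rewrite /desc_set_eq; have -> /= : all (fun x => x < n) I.
  by apply/allP => x xI; exact: leq_ltn_trans (leq_maxI xI) hn.
apply/forallP/andP => [descI|[/forallP le_m /eqP lowI] j].
  split.
    apply/forallP => j; apply/implyP => dj.
    by move/eqP: (descI j); rewrite dj => /esym /leq_maxI.
  apply/eqP/setP => x; rewrite !inE.
  by apply/eqP; exact: (descI (Ordinal (ord_lt x))).
apply/eqP; case: (leqP j m) => [jm|mj].
  by move/setP/(_ (inord j)): lowI; rewrite !inE /= inordK.
have := le_m j; rewrite leqNgt mj implybF => /negbTE ->.
by apply/esym/negbTE; apply: contraTN mj => /leq_maxI; rewrite -leqNgt.
Qed.

End InclusionExclusion.

Section BinomialPoly.
Variable R : numFieldType.
Local Open Scope ring_scope.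

Definition binom_poly (k : nat) : {poly R} :=
  k`!%:R^-1 *: \prod_(j < k) ('X - j%:R%:P).

Lemma prod_natr_subn k n : \prod_(j < k) (n%:R - j%:R) = (n ^_ k)%:R :> R.
Proof.
elim: k => [|k IHk]; first by rewrite big_ord0 ffactn0.
rewrite big_ord_recr /= IHk ffactnSr natrM.
by case: (leqP k n) => [kn|nk]; [rewrite natrB | rewrite ffact_small // !mul0r].
Qed.

Lemma binom_polyE k n : (binom_poly k).[n%:R] = 'C(n, k)%:R.
Proof.
rewrite hornerZ horner_prod; under eq_bigr => j _ do rewrite hornerXsubC.
rewrite prod_natr_subn -bin_ffact natrM mulrC mulfK //.
by rewrite pnatr_eq0 -lt0n fact_gt0.
Qed.

Lemma poly_eq0_eventually (q : {poly R}) m :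
  (forall n, (m < n)%N -> q.[n%:R] = 0) -> q = 0.
Proof.
move=> q0; apply/eqP/negPn/negP => nz_q.
pose rs := [seq (m.+1 + j)%:R | j <- iota 0 (size q)] : seq R.
have rs_roots : all (root q) rs.
  by apply/allP => _ /mapP [j _ ->]; rewrite /root q0 // ltnS leq_addr.
have rs_uniq : uniq rs.
  by rewrite map_inj_uniq ?iota_uniq // => a b /eqP; rewrite eqr_nat eqn_add2l => /eqP.
by have := max_poly_roots nz_q rs_roots rs_uniq; rewrite size_map size_iota ltnn.
Qed.

End BinomialPoly.

Local Open Scope ring_scope.

Lemma dcount_incl_excl (I : seq nat) n : (maxI I < n)%N ->
  (dcount I n)%:R = \sum_(S : {set 'I_(maxI I).+1} | S \subset ordset I)
     (-1) ^+ #|ordset I :\: S| * (count_desc_in n (natpred S))%:R :> rat.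
Proof.
move=> hn; rewrite /dcount natr_card_set.
under [in RHS]eq_bigr => S _ do rewrite /count_desc_in natr_card_set mulr_sumr.
rewrite exchange_big /=; apply: eq_bigr => s _.
rewrite desc_set_eq_ordset //; under eq_bigr => S _ do rewrite desc_in_natpred //.
case: ([forall j : 'I_n, _]) => /=; last by rewrite big1 // => S _; rewrite mulr0.
rewrite -sum_sign_interval big_mkcond [in RHS]big_mkcond; apply: eq_bigr => S _.
by case: (_ \subset S); case: (S \subset _); rewrite /= ?mulr1 ?mulr0.
Qed.

Definition descent_poly (I : seq nat) : {poly rat} :=
  \sum_(S : {set 'I_(maxI I).+1} | S \subset ordset I)
     ((-1) ^+ #|ordset I :\: S| * (count_desc_in (max_set S) (natpred S))%:R)
       *: binom_poly rat (max_set S).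

Lemma descent_polyE (I : seq nat) i : (descent_poly I).[i%:R] =
  \sum_(S : {set 'I_(maxI I).+1} | S \subset ordset I) (-1) ^+ #|ordset I :\: S| *
     (if (max_set S <= i)%N then count_desc_in i (natpred S) else 0)%:R.
Proof.
rewrite horner_sum; apply: eq_bigr => S _.
by rewrite hornerZ binom_polyE -mulrA -natrM mulnC binom_count_desc_in.
Qed.

Lemma descent_poly_dcount (I : seq nat) n :
  (maxI I < n)%N -> (descent_poly I).[n%:R] = (dcount I n)%:R.
Proof.
move=> hn; rewrite descent_polyE dcount_incl_excl //; apply: eq_bigr => S _.
by rewrite (leq_trans (max_set_le S)) // ltnW.
Qed.

Lemma descent_poly_root (I : seq nat) i : i \in I -> (descent_poly I).[i%:R] = 0.
Proof.
move=> iI; have im : (i <= maxI I)%N := leq_maxI iI.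
set x : 'I_(maxI I).+1 := inord i; have xi : x = i :> nat by rewrite inordK.
have xI : x \in ordset I by rewrite inE /= xi.
rewrite descent_polyE; apply: (sum_eq0_involution (toggleK x)) => [S|S _].
  by rewrite toggle_subset.
rewrite sign_toggle // mulNr max_set_toggle ?xi //; congr (- (_ * _%:R)).
case: ifP => // _; apply: eq_count_desc_in => j ji.
rewrite /natpred; case: (leqP j (maxI I)) => //= jm.
by rewrite in_toggle // -val_eqE /= inordK ?ltnS // xi ltn_eqF.
Qed.

Theorem theorem4p1 (I : seq nat) (HI : all (fun x => (0 < x)%N) I)
  (p : {poly rat})
  (Hp : forall n : nat, (maxI I < n)%N -> p.[n%:R] = (dcount I n)%:R)
  (i : nat) (Hi : i \in I) :
  p.[i%:R] = 0.
Proof.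
suff -> : p = descent_poly I by exact: descent_poly_root.
apply/subr0_eq/(poly_eq0_eventually (m := maxI I)) => n hn.
by rewrite hornerD hornerN Hp // descent_poly_dcount // subrr.
Qed.
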